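(* Let $R$ be a Hilbert ring and let $R \to S$ be intersection flat for ideals. If $S/\mathfrak{m}S$ is zero or a domain for every maximal ideal $\mathfrak{m}$ of $R$, then $R \to S$ has the prime extension property.
   Context: All rings are commutative with identity. A Hilbert ring is a ring in which every prime ideal is an intersection of maximal ideals. A ring homomorphism $R\to S$ is intersection flat for ideals if $S$ is flat over $R$ and for every family $\{I_\lambda\}$ of ideals of $R$, $\left(\bigcap_\lambda I_\lambda\right)S = \bigcap_\lambda (I_\lambda S)$. $R \to S$ has the prime extension property if for every prime ideal $P$ of $R$, $PS$ is prime in $S$ or $PS = S$. *)

From HB Require Import structures.
From mathcomp Require Import all_boot all_order all_algebra.
Set Implicit Arguments. Unset Strict Implicit. Unset Printing Implicit Defensive.
Import GRing.Theory.
Local Open Scope ring_scope.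

Definition ideal (R : comPzRingType) (I : R -> Prop) : Prop :=
  [/\ I 0, (forall x y, I x -> I y -> I (x + y)) & (forall r x, I x -> I (r * x))].

Definition prime_ideal (R : comPzRingType) (P : R -> Prop) : Prop :=
  [/\ ideal P, ~ P 1 & (forall a b, P (a * b) -> P a \/ P b)].

Definition maximal_ideal (R : comPzRingType) (M : R -> Prop) : Prop :=
  [/\ ideal M, ~ M 1 &
      (forall J : R -> Prop, ideal J -> (forall x, M x -> J x) ->
         (forall x, J x -> M x) \/ J 1)].

Definition hilbert_ring (R : comPzRingType) : Prop :=
  forall P : R -> Prop, prime_ideal P ->
    forall x, P x <-> (forall M, maximal_ideal M -> (forall y, P y -> M y) -> M x).

Definition ext_ideal (R S : comPzRingType) (f : {rmorphism R -> S})
  (I : R -> Prop) : S -> Prop :=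
  fun s => exists n (a : 'I_n -> R) (t : 'I_n -> S),
    (forall i, I (a i)) /\ s = \sum_(i < n) f (a i) * t i.

(* Flatness of S over R (via f), stated by the equational criterion
   (every R-linear relation in S is trivial). *)
Definition flat_hom (R S : comPzRingType) (f : {rmorphism R -> S}) : Prop :=
  forall n (r : 'I_n -> R) (x : 'I_n -> S),
    \sum_(i < n) f (r i) * x i = 0 ->
    exists m (a : 'I_n -> 'I_m -> R) (y : 'I_m -> S),
      (forall i, x i = \sum_(j < m) f (a i j) * y j) /\
      (forall j, \sum_(i < n) r i * a i j = 0).

Definition intersection_flat_for_ideals (R S : comPzRingType)
  (f : {rmorphism R -> S}) : Prop :=
  flat_hom f /\
  forall (L : Type) (I : L -> R -> Prop), (forall l, ideal (I l)) ->
    forall s, ext_ideal f (fun x => forall l, I l x) s <->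
              (forall l, ext_ideal f (I l) s).

Definition prime_extension_property (R S : comPzRingType)
  (f : {rmorphism R -> S}) : Prop :=
  forall P : R -> Prop, prime_ideal P ->
    prime_ideal (ext_ideal f P) \/ ext_ideal f P 1.

From HB Require Import structures.
From mathcomp Require Import all_boot all_order all_algebra.
From Stdlib Require Import Classical.
Set Implicit Arguments. Unset Strict Implicit. Unset Printing Implicit Defensive.
Import GRing.Theory.
Local Open Scope ring_scope.

(* Let P be prime with PS <> S and ab in PS. For every maximal M over P, ab lies
   in MS, which is S or prime, so a or b lies in MS. Let I_a (resp. I_b) be the
   intersection of the maximal M over P with a in MS (resp. b in MS).
   Intersection flatness gives a in I_a S and b in I_b S. Every maximal M over P
   contains I_a or I_b, so I_a I_b lies in the intersection of these M, which is
   P since R is Hilbert; as P is prime, I_a or I_b is contained in P, whence a or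
   b lies in PS. *)

Section ExtendedIdeal.
Variables (R S : comPzRingType) (f : {rmorphism R -> S}).
Implicit Types (I J : R -> Prop).

Lemma ext_ideal0 I : ext_ideal f I 0.
Proof.
by exists 0%N, (fun _ => 0), (fun _ => 0); split; [case | rewrite big_ord0].
Qed.

Lemma ext_idealD I x y :
  ext_ideal f I x -> ext_ideal f I y -> ext_ideal f I (x + y).
Proof.
move=> [n1 [a1 [t1 [Ia1 ->]]]] [n2 [a2 [t2 [Ia2 ->]]]].
exists (n1 + n2)%N,
  (fun i => match split i with inl j => a1 j | inr k => a2 k end),
  (fun i => match split i with inl j => t1 j | inr k => t2 k end).
split; first by move=> i; case: (split i).
by rewrite big_split_ord /=; congr (_ + _); apply: eq_bigr => i _;
  rewrite ?(unsplitK (inl _ i)) ?(unsplitK (inr _ i)).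
Qed.

Lemma ext_idealM I r x : ext_ideal f I x -> ext_ideal f I (r * x).
Proof.
move=> [n [a [t [Ia ->]]]]; exists n, a, (fun i => r * t i); split => //.
by rewrite mulr_sumr; apply: eq_bigr => i _; rewrite mulrCA.
Qed.

Lemma ideal_ext_ideal I : ideal (ext_ideal f I).
Proof. by split; [apply: ext_ideal0 | apply: ext_idealD | apply: ext_idealM]. Qed.

Lemma ext_ideal_sub I J : (forall x, I x -> J x) ->
  forall s, ext_ideal f I s -> ext_ideal f J s.
Proof. by move=> IJ s [n [a [t [Ia ->]]]]; exists n, a, t; split=> // i; apply: IJ. Qed.

Lemma ext_ideal_meet (Q : (R -> Prop) -> Prop) c :
  intersection_flat_for_ideals f -> (forall M, Q M -> ideal M) ->
  (forall M, Q M -> ext_ideal f M c) ->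
  ext_ideal f (fun x => forall M, Q M -> M x) c.
Proof.
move=> [_ iflat] idQ extQ.
have meetE := iflat {M | Q M} sval (fun M => idQ _ (svalP M)) c.
apply: (ext_ideal_sub _ (proj2 meetE _)) => [x meet_x M QM | [M QM]].
  exact: (meet_x (exist _ M QM)).
exact: extQ.
Qed.

End ExtendedIdeal.

Lemma ideal1_or_prime_mul (S : comPzRingType) (J : S -> Prop) a b :
  ideal J -> J 1 \/ prime_ideal J -> J (a * b) -> J a \/ J b.
Proof.
move=> [_ _ idJ] [J1 _ | [_ _ primeJ]]; last exact: primeJ.
by left; rewrite -[a]mulr1; apply: idJ.
Qed.

Lemma hilbert_prime_sub_or (R : comPzRingType) (P I J : R -> Prop) :
  hilbert_ring R -> prime_ideal P ->
  (forall M, maximal_ideal M -> (forall x, P x -> M x) ->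
     (forall x, I x -> M x) \/ (forall x, J x -> M x)) ->
  (forall x, I x -> P x) \/ (forall x, J x -> P x).
Proof.
move=> hilbR primeP cover.
case: (classic (forall x, I x -> P x)) => [IP | /not_all_ex_not [x]]; first by left.
move=> nIPx; have [Ix nPx] := imply_to_and _ _ nIPx; right => y Jy.
have [_ _ /(_ x y) primePxy] := primeP.
have Pxy : P (x * y).
  apply/(hilbR P primeP) => M maxM PM; have [[_ _ idM] _ _] := maxM.
  case: (cover M maxM PM) => [/(_ x Ix) Mx | /(_ y Jy) My]; last exact: idM.
  by rewrite mulrC; apply: idM.
by case: (primePxy Pxy).
Qed.

Section PrimeExtension.
Variables (R S : comPzRingType) (f : {rmorphism R -> S}).
Hypothesis hilbR : hilbert_ring R.
Hypothesis iflat : intersection_flat_for_ideals f.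
Hypothesis fibres : forall m : R -> Prop, maximal_ideal m ->
  ext_ideal f m 1 \/ prime_ideal (ext_ideal f m).
Variable P : R -> Prop.
Hypothesis primeP : prime_ideal P.

Let maximal_over_ext c (M : R -> Prop) :=
  [/\ maximal_ideal M, forall x, P x -> M x & ext_ideal f M c].
Let meet_maximal_over_ext c x := forall M, maximal_over_ext c M -> M x.

Lemma ext_ideal_meet_maximal_over c : ext_ideal f (meet_maximal_over_ext c) c.
Proof. by apply: ext_ideal_meet => // M [[]]. Qed.

Lemma ext_prime_mul a b :
  ext_ideal f P (a * b) -> ext_ideal f P a \/ ext_ideal f P b.
Proof.
move=> Pab.
have cover M : maximal_ideal M -> (forall x, P x -> M x) ->
    (forall x, meet_maximal_over_ext a x -> M x) \/
    (forall x, meet_maximal_over_ext b x -> M x).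
  move=> maxM PM.
  have [Ma | Mb] := ideal1_or_prime_mul (ideal_ext_ideal f M) (fibres maxM)
    (ext_ideal_sub PM Pab).
  + by left=> x; apply.
  + by right=> x; apply.
have [meet_a | meet_b] := hilbert_prime_sub_or hilbR primeP cover.
- by left; apply: ext_ideal_sub meet_a _ (ext_ideal_meet_maximal_over a).
- by right; apply: ext_ideal_sub meet_b _ (ext_ideal_meet_maximal_over b).
Qed.

End PrimeExtension.

(* S/mS is zero  <->  mS contains 1;  S/mS is a domain  <->  mS is prime. *)
Theorem proposition5p9 (R S : comPzRingType) (f : {rmorphism R -> S}) :
  hilbert_ring R ->
  intersection_flat_for_ideals f ->
  (forall m : R -> Prop, maximal_ideal m ->
     ext_ideal f m 1%R \/ prime_ideal (ext_ideal f m)) ->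
  prime_extension_property f.
Proof.
move=> hilbR iflat fibres P primeP.
case: (classic (ext_ideal f P 1)) => [P1 | nP1]; [by right | left].
split=> //; first exact: ideal_ext_ideal.
exact: ext_prime_mul.
Qed.
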